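(* Let $G$ be a graph with a type-2A 1-planar drawing $D$, and let $S$ be a vertex-cut of $G$. Then: (i) for any two distinct components $F$ and $F'$ of $G-S$, if $ab\in E(F)$ and $cd$ is an edge with one endvertex in $S$ and the other in $V(F')$, then $ab$ and $cd$ do not cross in $D$; and (ii) any two edges belonging to distinct components of $G-S$ do not cross each other in $D$.
   Context: All drawings are good (no edge crosses itself, two edges cross at most once, adjacent edges do not cross). A drawing is 1-planar if every edge is crossed at most once. If edges $ab$ and $cd$ cross in a 1-planar drawing of $G$, the associated edges of this crossing are the edges of $G[\{a,b,c,d\}]$ other than $ab$ and $cd$. A 1-planar drawing is type-2A if every crossing has at least two associated edges, and every crossing with exactly two associated edges has these two edges disjoint. A vertex-cut is a set $S\subseteq V(G)$ with $G-S$ disconnected. *)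

From HB Require Import structures.
From mathcomp Require Import all_boot all_order all_algebra.
From mathcomp Require Import all_classical all_reals all_analysis.
Set Implicit Arguments. Unset Strict Implicit. Unset Printing Implicit Defensive.
Import Order.TTheory GRing.Theory Num.Theory.
Local Open Scope ring_scope.
Import numFieldNormedType.Exports.

Definition simple_graph (T : finType) (adj : rel T) : Prop :=
  symmetric adj /\ irreflexive adj.

Record drawing (R : realType) (T : finType) (adj : rel T) := Drawing {
  vpos : T -> (R * R)%type;
  arc : T -> T -> R -> (R * R)%type;
  vpos_inj : injective vpos;
  arc_rev : forall a b t, arc b a t = arc a b (1 - t);
  arc_start : forall a b, adj a b -> arc a b 0 = vpos a;
  arc_end : forall a b, adj a b -> arc a b 1 = vpos b;
  arc_cont : forall a b, adj a b ->
    ({within `[0%R, 1%R], continuous (arc a b)})%classic;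
  arc_simple : forall a b s t, adj a b -> 0 <= s <= 1 -> 0 <= t <= 1 ->
    arc a b s = arc a b t -> s = t;
  arc_avoid : forall a b x t, adj a b -> 0 < t < 1 -> arc a b t <> vpos x
}.

Definition cross_at (R : realType) (T : finType) (adj : rel T)
  (D : drawing R adj) (a b c d : T) (p : (R * R)%type) : Prop :=
  adj a b /\ adj c d /\ [set a; b] != [set c; d] /\
  exists s t, [/\ 0 < s < 1, 0 < t < 1, arc D a b s = p & arc D c d t = p].

Definition cross (R : realType) (T : finType) (adj : rel T)
  (D : drawing R adj) (a b c d : T) : Prop :=
  exists p, cross_at D a b c d p.

(* Good drawing: adjacent edges do not cross, and two edges cross at most
   once (in at most one point).  (No edge crosses itself: arc_simple.) *)
Definition good (R : realType) (T : finType) (adj : rel T)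
  (D : drawing R adj) : Prop :=
  (forall a b c d, cross D a b c d ->
     [disjoint [set a; b] & [set c; d]]) /\
  (forall a b c d p q, cross_at D a b c d p -> cross_at D a b c d q -> p = q).

Definition one_planar (R : realType) (T : finType) (adj : rel T)
  (D : drawing R adj) : Prop :=
  forall a b c d e f p q, cross_at D a b c d p -> cross_at D a b e f q ->
    p = q /\ [set c; d] = [set e; f].

Definition is_edge (T : finType) (adj : rel T) (e : {set T}) : bool :=
  [exists x, exists y, (e == [set x; y]) && adj x y].

Definition assoc_edges (T : finType) (adj : rel T) (a b c d : T)
  : {set {set T}} :=
  [set e : {set T} | [&& is_edge adj e, e \subset [set a; b; c; d],
                        e != [set a; b] & e != [set c; d]]].

Definition type2A (R : realType) (T : finType) (adj : rel T)
  (D : drawing R adj) : Prop :=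
  good D /\ one_planar D /\
  forall a b c d, cross D a b c d ->
    (2 <= #|assoc_edges adj a b c d|)%N /\
    (#|assoc_edges adj a b c d| = 2%N ->
       forall e1 e2, e1 \in assoc_edges adj a b c d ->
         e2 \in assoc_edges adj a b c d -> e1 != e2 -> [disjoint e1 & e2]).

Definition del_adj (T : finType) (adj : rel T) (S : {set T}) : rel T :=
  fun x y => [&& adj x y, x \notin S & y \notin S].

Definition vertex_cut (T : finType) (adj : rel T) (S : {set T}) : Prop :=
  exists x y, [/\ x \notin S, y \notin S & ~~ connect (del_adj adj S) x y].

From mathcomp Require Import all_boot all_order all_algebra.
From mathcomp Require Import all_classical all_reals all_analysis.

Set Implicit Arguments.
Unset Strict Implicit.
Unset Printing Implicit Defensive.

(* If ab and cd cross, the type-2A condition gives at least two associated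
   edges, and in a simple graph every associated edge joins {a, b} to {c, d}.
   Edges of distinct components of G - S have no such joining edge, which
   gives (ii).  In (i), d lies in another component than a and b, so the only
   candidates are ac and bc: both must be present, hence they are exactly the
   two associated edges, yet they share c. *)

Section DeletedGraph.
Variables (T : finType) (adj : rel T) (S : {set T}).
Hypothesis adj_sym : symmetric adj.

Lemma del_adj_sym : symmetric (del_adj adj S).
Proof.
by move=> x y; rewrite /del_adj adj_sym; case: (x \in S) (y \in S) => [] [].
Qed.

Lemma connect_del_adj1 x y :
  x \notin S -> y \notin S -> adj x y -> connect (del_adj adj S) x y.
Proof. by move=> xS yS xy; apply: connect1; rewrite /del_adj xy xS yS. Qed.

Lemma connect_del_adj_edge a b x :
  a \notin S -> b \notin S -> adj a b -> x \in [set a; b] ->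
  connect (del_adj adj S) a x.
Proof.
by move=> aS bS ab; rewrite !inE => /orP[]/eqP->; last exact: connect_del_adj1.
Qed.

Lemma connect_del_adj_edgeV a b x :
  a \notin S -> b \notin S -> adj a b -> x \in [set a; b] ->
  connect (del_adj adj S) x a.
Proof.
move=> aS bS ab xab; rewrite (sym_connect_sym del_adj_sym).
exact: connect_del_adj_edge ab xab.
Qed.

End DeletedGraph.

Lemma notin_set2 (U : finType) (S : {set U}) (a b x : U) :
  a \notin S -> b \notin S -> x \in [set a; b] -> x \notin S.
Proof. by move=> aS bS; rewrite !inE => /orP[]/eqP->. Qed.

Lemma set2_eq_of_mem (U : finType) (a b x y : U) :
  x \in [set a; b] -> y \in [set a; b] -> x != y -> [set x; y] = [set a; b].
Proof.
by rewrite !inE => /orP[]/eqP-> /orP[]/eqP->; rewrite ?eqxx // finset.setUC.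
Qed.

Lemma subset_set2_card (U : finType) (A : {set U}) (e1 e2 : U) :
  A \subset [set e1; e2] -> (2 <= #|A|)%N ->
  [/\ e1 \in A, e2 \in A, e1 != e2 & #|A| = 2%N].
Proof.
move=> sub cardA.
have card2 : (#|[set e1; e2]| <= 2)%N by rewrite cards2; case: (_ != _).
have eqA : A = [set e1; e2].
  by apply/eqP; rewrite eqEcard sub (leq_trans card2 cardA).
by move: cardA; rewrite eqA cards2 set21 set22; case: (_ != _).
Qed.

Section AssociatedEdges.
Variables (T : finType) (adj : rel T).
Hypothesis adj_simple : simple_graph adj.

Lemma mem_assoc_edges a b c d e :
  e \in assoc_edges adj a b c d ->
  exists x y, [/\ x \in [set a; b], y \in [set c; d], adj x y & e = [set x; y]].
Proof.
have [adj_sym adj_irr] := adj_simple.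
rewrite inE => /and4P[/existsP[x /existsP[y /andP[/eqP-> xy]]] sub ne_ab ne_cd].
have side z : z \in [set x; y] -> (z \in [set a; b]) || (z \in [set c; d]).
  by move/(fintype.subsetP sub); rewrite !inE -!orbA.
have xy_neq : x != y by apply: contraTneq xy => ->; rewrite adj_irr.
case/orP: (side x (set21 x y)) => xs; case/orP: (side y (set22 x y)) => ys.
- by rewrite (set2_eq_of_mem xs ys xy_neq) eqxx in ne_ab.
- by exists x, y.
- by exists y, x; rewrite adj_sym (finset.setUC [set x]).
- by rewrite (set2_eq_of_mem xs ys xy_neq) eqxx in ne_cd.
Qed.

Variable S : {set T}.

Lemma assoc_edges_between_components a b c d :
  a \notin S -> b \notin S -> adj a b ->
  c \notin S -> d \notin S -> adj c d ->
  ~~ connect (del_adj adj S) a c -> assoc_edges adj a b c d = finset.set0.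
Proof.
have [adj_sym _] := adj_simple.
move=> aS bS ab cS dS cd not_ac; apply/setP => e; rewrite finset.in_set0.
apply/negP => /mem_assoc_edges[x [y [xab ycd xy _]]].
have xS := notin_set2 aS bS xab.
have yS := notin_set2 cS dS ycd.
case/negP: not_ac.
apply: connect_trans (connect_del_adj_edge aS bS ab xab) _.
apply: connect_trans (connect_del_adj1 xS yS xy) _.
exact: connect_del_adj_edgeV ycd.
Qed.

Lemma assoc_edges_cut_vertex a b c d :
  a \notin S -> b \notin S -> adj a b -> d \notin S ->
  ~~ connect (del_adj adj S) a d ->
  assoc_edges adj a b c d \subset [set [set a; c]; [set b; c]].
Proof.
move=> aS bS ab dS not_ad.
apply/fintype.subsetP => e /mem_assoc_edges[x [y [xab ycd xy ->]]].
have xS := notin_set2 aS bS xab.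
move: ycd; rewrite !inE => /orP[]/eqP y_eq; subst y.
  by move: xab; rewrite !inE => /orP[]/eqP->; rewrite eqxx ?orbT.
case/negP: not_ad.
exact: connect_trans (connect_del_adj_edge aS bS ab xab)
                     (connect_del_adj1 xS dS xy).
Qed.

End AssociatedEdges.

Theorem lemma7 (R : realType) (T : finType) (adj : rel T) (D : drawing R adj)
  (S : {set T}) :
  simple_graph adj -> type2A D -> vertex_cut adj S ->
  (* (i) ab in component F, cd with c in S and d in a different component F' *)
  (forall a b c d,
     a \notin S -> b \notin S -> adj a b ->
     c \in S -> d \notin S -> adj c d ->
     ~~ connect (del_adj adj S) a d ->
     ~ cross D a b c d)
  /\
  (* (ii) edges of distinct components of G - S do not cross *)
  (forall a b c d,
     a \notin S -> b \notin S -> adj a b ->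
     c \notin S -> d \notin S -> adj c d ->
     ~~ connect (del_adj adj S) a c ->
     ~ cross D a b c d).
Proof.
move=> adj_simple [_ [_ type2A_assoc]] _; split.
- move=> a b c d aS bS ab _ dS _ not_ad /type2A_assoc[card_ge2 disj2].
  have sub := assoc_edges_cut_vertex adj_simple c aS bS ab dS not_ad.
  have [acA bcA ac_bc card2] := subset_set2_card sub card_ge2.
  have := disjointFr (disj2 card2 _ _ acA bcA ac_bc) (set22 a c).
  by rewrite set22.
- move=> a b c d aS bS ab cS dS cd not_ac /type2A_assoc[card_ge2 _].
  have no_assoc :=
    assoc_edges_between_components adj_simple aS bS ab cS dS cd not_ac.
  by move: card_ge2; rewrite no_assoc cards0.
Qed.
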